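(* Let $E_0>0$ and let $\phi$ satisfy the standing assumptions below with $n\le 3$. Define, for $V\in(0,E_0)$, $\kappa(V)=\frac{\varrho+p}{\varrho+3p}\cdot\frac{\varrho'(V)}{p'(V)}$ and $I(V)=\frac15\kappa^2+2\kappa+(\varrho+p)\frac{\kappa'(V)}{p'(V)}$ (i.e. $I=\frac15\kappa^2+2\kappa+(\varrho+p)\frac{d\kappa}{dp}$ with $\frac{d\varrho}{dp}=\varrho'/p'$, $\frac{d\kappa}{dp}=\kappa'/p'$). Then $I(V)\to-\infty$ as $V\to E_0^-$; in particular there is $V_0<E_0$ such that $I(V)\le0$ for all $V\in[V_0,E_0)$, i.e. $I\le 0$ for all $0<p\le p_0:=p(V_0)$.
   Context: Standing assumptions on $\phi:(-\infty,1]\to\mathbb R_+$: $\phi(x)=0$ for $x<0$, $\phi$ analytic on $[0,1]$, and there is $n\in\{0,1,2,\dots\}$ with $\phi'(0)=\dots=\phi^{(n-1)}(0)=0$, $\phi^{(n)}(0)>0$. For $V\in(0,E_0]$: $\varrho(V)=\frac{4\pi}{V^3}\int_V^{E_0}\phi(1-E/E_0)E^2\sqrt{(E/V)^2-1}\,dE$ and $p(V)=\frac{4\pi}{3V}\int_V^{E_0}\phi(1-E/E_0)[(E/V)^2-1]^{3/2}dE$; primes denote derivatives in $V$. *)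

From Stdlib Require Import Reals Lra Lia ClassicalEpsilon.
Open Scope R_scope.

(* Total Riemann integral: the value of RiemannInt when f is Riemann
   integrable on [a,b] (this value is independent of the proof), junk otherwise. *)
Definition RInt (f : R -> R) (a b : R) : R :=
  epsilon (inhabits 0)
    (fun l => exists pr : Riemann_integrable f a b, RiemannInt pr = l).

(* Total derivative: the derivative of f at x when it exists, junk otherwise. *)
Definition Deriv (f : R -> R) (x : R) : R :=
  epsilon (inhabits 0) (fun l => derivable_pt_lim f x l).

Definition RDeriv (f : R -> R) (x : R) : R :=
  epsilon (inhabits 0) (fun l =>
    forall eps, 0 < eps -> exists d, 0 < d /\
      forall h, 0 < h < d -> Rabs ((f (x + h) - f x) / h - l) < eps).

Fixpoint RDerivn (k : nat) (f : R -> R) : R -> R :=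
  match k with
  | O => f
  | S k' => RDeriv (RDerivn k' f)
  end.

Definition analytic_on_01 (phi : R -> R) : Prop :=
  forall x0, 0 <= x0 <= 1 ->
    exists (a : nat -> R) (r : R), 0 < r /\
      forall x, 0 <= x <= 1 -> Rabs (x - x0) < r ->
        infinite_sum (fun k => a k * (x - x0) ^ k) (phi x).

Definition standing_phi (phi : R -> R) (n : nat) : Prop :=
  (forall x, x <= 1 -> 0 <= phi x) /\
  (forall x, x < 0 -> phi x = 0) /\
  analytic_on_01 phi /\
  (forall k, (1 <= k)%nat -> (k < n)%nat -> RDerivn k phi 0 = 0) /\
  0 < RDerivn n phi 0.

Definition rho (phi : R -> R) (E0 V : R) : R :=
  4 * PI / V ^ 3 *
  RInt (fun E => phi (1 - E / E0) * E ^ 2 * sqrt ((E / V) ^ 2 - 1)) V E0.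

(* [(E/V)^2-1]^{3/2} written as sqrt(...)^3 (argument is >= 0 on [V,E0]) *)
Definition pr (phi : R -> R) (E0 V : R) : R :=
  4 * PI / (3 * V) *
  RInt (fun E => phi (1 - E / E0) * (sqrt ((E / V) ^ 2 - 1)) ^ 3) V E0.

Definition kappa (phi : R -> R) (E0 V : R) : R :=
  (rho phi E0 V + pr phi E0 V) / (rho phi E0 V + 3 * pr phi E0 V) *
  (Deriv (rho phi E0) V / Deriv (pr phi E0) V).

Definition Ifun (phi : R -> R) (E0 V : R) : R :=
  / 5 * (kappa phi E0 V) ^ 2 + 2 * kappa phi E0 V +
  (rho phi E0 V + pr phi E0 V) * (Deriv (kappa phi E0) V / Deriv (pr phi E0) V).

(* Near [V = E0] put [s = E0 - V] and substitute [E = E0 - s + s y].  If [m <= n] is the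
   order of [phi] at 0, then [rho (E0 - s) = s ^ (m + 3/2) * f s] and
   [p (E0 - s) = s ^ (m + 5/2) * g s], where [f], [g] are integrals over [y] in [0, 1] of
   integrands depending smoothly on [s], with [f 0, g 0 > 0].  Differentiating under the
   integral sign, [s ^ 2 * I (E0 - s)] becomes a rational expression in [s] and the first
   two derivatives of [f] and [g], continuous at [s = 0] with value
   [a f(0)^2 / ((a + 1)^2 g(0)^2) * (a / 5 - 1)], [a = m + 3/2].  For [m <= 3] this is
   negative, so [I (E0 - s) < c / s ^ 2] with [c < 0] for small [s]. *)

From Pilot Require Import Defs.
From Stdlib Require Import Reals Lra Lia ClassicalEpsilon FunctionalExtensionality.
From Coquelicot Require Import Coquelicot.
Open Scope R_scope.

Lemma is_derive_eq (f : R -> R) (x l l' : R) : is_derive f x l -> @eq R l l' -> is_derive f x l'.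
Proof. intros H ->; exact H. Qed.

Lemma is_derive_const_R (a x : R) : is_derive (fun _ : R => a) x 0.
Proof. auto_derive; auto. Qed.

Lemma is_derive_id_R (x : R) : is_derive (fun t : R => t) x 1.
Proof. auto_derive; auto. Qed.

Lemma is_derive_Rplus (f g : R -> R) (x a b : R) : is_derive f x a -> is_derive g x b ->
  is_derive (fun y => f y + g y) x (a + b).
Proof. intros Hf Hg. apply (is_derive_plus f g x a b Hf Hg). Qed.

Lemma is_derive_Rmult (f g : R -> R) (x a b : R) : is_derive f x a -> is_derive g x b ->
  is_derive (fun y => f y * g y) x (a * g x + f x * b).
Proof. intros Hf Hg. apply (is_derive_mult f g x a b Hf Hg). intros; apply Rmult_comm. Qed.

Lemma continuity_pt_of_ex_derive (f : R -> R) x : ex_derive f x -> continuity_pt f x.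
Proof.
  intros H. apply continuity_pt_filterlim.
  apply (ex_derive_continuous (K:=R_AbsRing) (V:=R_NormedModule) f), H.
Qed.

Lemma continuity_2d_pt_continuous_snd (h : R -> R -> R) s t :
  continuity_2d_pt h s t -> continuous (h s) t.
Proof.
  intros H. apply continuity_pt_filterlim.
  intros eps Heps. destruct (H (mkposreal eps Heps)) as [del Hdel].
  exists del. split; [apply cond_pos|]. intros x [_ Hx]. simpl in *.
  unfold R_dist in *. apply Hdel; [|exact Hx].
  rewrite Rminus_eq_0, Rabs_R0. apply cond_pos.
Qed.

Lemma continuity_2d_pt_snd (c : R -> R) s t :
  continuity_pt c t -> continuity_2d_pt (fun _ v => c v) s t.
Proof.
  intros H. apply (continuity_1d_2d_pt_comp c (fun _ v => v)); auto.
  apply continuity_2d_pt_id2.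
Qed.

(* Differentiability in [s] is asked for [t] in a neighbourhood of [0, 1], so that each
   derivative coincides with [Derive] near every point of (-d, d) x [0, 1], as needed for
   differentiation under the integral sign. *)
Fixpoint smooth_in_param (k : nat) (d : R) (h : R -> R -> R) : Prop :=
  (forall s t, -d < s < d -> 0 <= t <= 1 -> continuity_2d_pt h s t) /\
  match k with
  | O => True
  | S k' => exists h', (forall s t, -d < s < d -> -1/2 < t < 3/2 ->
              is_derive (fun z => h z t) s (h' s t)) /\ smooth_in_param k' d h'
  end.

Lemma smooth_in_param_cont k d h : smooth_in_param k d h ->
  forall s t, -d < s < d -> 0 <= t <= 1 -> continuity_2d_pt h s t.
Proof. destruct k; simpl; tauto. Qed.

Lemma smooth_in_param_S k : forall d h, smooth_in_param (S k) d h -> smooth_in_param k d h.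
Proof.
  induction k as [|k IHk]; intros d h [Hc [h' [Hd Hs]]]; split; auto.
  exists h'; split; auto.
Qed.

Lemma smooth_in_param_plus k : forall d f g, smooth_in_param k d f -> smooth_in_param k d g ->
  smooth_in_param k d (fun s t => f s t + g s t).
Proof.
  induction k as [|k IHk]; intros d f g Hf Hg.
  - split; [|exact I]. intros. apply continuity_2d_pt_plus; firstorder.
  - destruct Hf as [Cf [f' [Df Sf]]], Hg as [Cg [g' [Dg Sg]]].
    split. { intros. apply continuity_2d_pt_plus; auto. }
    exists (fun s t => f' s t + g' s t). split; auto.
    intros. apply (is_derive_plus (fun z => f z t) (fun z => g z t)); auto.
Qed.

Lemma smooth_in_param_mult k : forall d f g, smooth_in_param k d f -> smooth_in_param k d g ->
  smooth_in_param k d (fun s t => f s t * g s t).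
Proof.
  induction k as [|k IHk]; intros d f g Hf Hg.
  - split; [|exact I]. intros. apply continuity_2d_pt_mult; firstorder.
  - pose proof (smooth_in_param_S _ _ _ Hf) as Wf.
    pose proof (smooth_in_param_S _ _ _ Hg) as Wg.
    destruct Hf as [Cf [f' [Df Sf]]], Hg as [Cg [g' [Dg Sg]]].
    split. { intros. apply continuity_2d_pt_mult; auto. }
    exists (fun s t => f' s t * g s t + f s t * g' s t). split.
    + intros. apply (is_derive_Rmult (fun z => f z t) (fun z => g z t)); auto.
    + apply smooth_in_param_plus; apply IHk; auto.
Qed.

Lemma smooth_in_param_const k : forall d (c : R -> R),
  (forall t, 0 <= t <= 1 -> continuity_pt c t) -> smooth_in_param k d (fun _ t => c t).
Proof.
  induction k as [|k IHk]; intros d c Hc.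
  - split; [|exact I]. intros. apply continuity_2d_pt_snd; auto.
  - split. { intros. apply continuity_2d_pt_snd; auto. }
    exists (fun _ _ => 0). split.
    + intros. apply is_derive_const_R.
    + apply (IHk d (fun _ => 0)). intros. apply continuity_pt_const. intros x y; auto.
Qed.

Definition derivative_tower (F : nat -> R -> R) (lo hi : R) : Prop :=
  forall j x, lo < x < hi -> is_derive (F j) x (F (S j) x).

Lemma continuity_2d_pt_comp_scale (F c : R -> R) s t : ex_derive F (s * c t) ->
  continuity_pt c t -> continuity_2d_pt (fun s t => F (s * c t)) s t.
Proof.
  intros HF Hc. apply (continuity_1d_2d_pt_comp F (fun u v => u * c v)).
  - apply continuity_pt_of_ex_derive, HF.
  - apply continuity_2d_pt_mult; [apply continuity_2d_pt_id1|apply continuity_2d_pt_snd, Hc].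
Qed.

Lemma smooth_in_param_comp k : forall d F c lo hi, derivative_tower F lo hi ->
  (forall t, 0 <= t <= 1 -> continuity_pt c t) ->
  (forall s t, -d < s < d -> -1/2 < t < 3/2 -> lo < s * c t < hi) ->
  smooth_in_param k d (fun s t => F O (s * c t)).
Proof.
  induction k as [|k IHk]; intros d F c lo hi HF Hc Hd.
  all: assert (Hcont : forall s t, -d < s < d -> 0 <= t <= 1 ->
                 continuity_2d_pt (fun s t => F O (s * c t)) s t)
         by (intros s t Hs Ht; apply continuity_2d_pt_comp_scale; [|auto];
             eexists; apply HF, Hd; auto; lra).
  - split; [exact Hcont|exact I].
  - split; [exact Hcont|].
    exists (fun s t => c t * F 1%nat (s * c t)). split.
    + intros s t Hs Ht. eapply is_derive_eq.
      * apply (is_derive_comp (F O) (fun z => z * c t)); [apply HF; auto|].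
        apply (is_derive_Rmult (fun z => z) (fun _ => c t)).
        -- apply is_derive_id_R.
        -- apply is_derive_const_R.
      * simpl. unfold scal; simpl. unfold mult; simpl. ring.
    + apply smooth_in_param_mult; [apply smooth_in_param_const; auto|].
      apply (IHk d (fun j => F (S j)) c lo hi); auto.
      intros j x Hx. apply HF; auto.
Qed.

Lemma smooth_in_param_ex_RInt k d h s : smooth_in_param k d h -> -d < s < d ->
  ex_RInt (h s) 0 1.
Proof.
  intros Hh Hs. apply (ex_RInt_continuous (V:=R_CompleteNormedModule)). intros t Ht.
  rewrite Rmin_left in Ht by lra; rewrite Rmax_right in Ht by lra.
  apply continuity_2d_pt_continuous_snd. eapply smooth_in_param_cont; eauto.
Qed.

Lemma locally_open_interval d s : -d < s < d -> locally s (fun y => -d < y < d).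
Proof. intros H. apply (locally_interval _ s (-d) d); simpl; try lra. intros; lra. Qed.

Lemma smooth_in_param_RInt k d h : smooth_in_param (S k) d h ->
  exists h', smooth_in_param k d h' /\
  forall s, -d < s < d -> is_derive (fun z => RInt (h z) 0 1) s (RInt (h' s) 0 1).
Proof.
  intros Hh. pose proof Hh as [Hc [h' [Hd Hs]]]. exists h'. split; auto.
  intros s Hsd.
  assert (HD : forall u v, -d < u < d -> -1/2 < v < 3/2 -> Derive (fun z => h z v) u = h' u v).
  { intros. apply is_derive_unique. apply Hd; auto. }
  eapply is_derive_eq.
  - apply (is_derive_RInt_param (fun z t => h z t) 0 1 s).
    + apply (filter_imp (fun y => -d < y < d)); [|apply locally_open_interval; auto].
      intros y Hy t Ht. rewrite Rmin_left in Ht by lra; rewrite Rmax_right in Ht by lra.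
      eexists. apply Hd; auto; lra.
    + intros t Ht. rewrite Rmin_left in Ht by lra; rewrite Rmax_right in Ht by lra.
      apply continuity_2d_pt_ext_loc with (f := h');
        [|apply (smooth_in_param_cont _ _ _ Hs); auto].
      assert (Hp : 0 < Rmin (Rmin (s + d) (d - s)) (1/2)) by (repeat apply Rmin_pos; lra).
      exists (mkposreal _ Hp). intros u v Hu Hv. simpl in *.
      apply Rabs_def2 in Hu. apply Rabs_def2 in Hv.
      pose proof (Rmin_l (Rmin (s + d) (d - s)) (1/2)).
      pose proof (Rmin_r (Rmin (s + d) (d - s)) (1/2)).
      pose proof (Rmin_l (s + d) (d - s)). pose proof (Rmin_r (s + d) (d - s)).
      symmetry. apply HD; lra.
    + apply (filter_imp (fun y => -d < y < d)); [|apply locally_open_interval; auto].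
      intros y Hy. apply (smooth_in_param_ex_RInt _ _ _ _ Hh Hy).
  - apply RInt_ext. intros x Hx.
    rewrite Rmin_left in Hx by lra; rewrite Rmax_right in Hx by lra.
    apply HD; auto; lra.
Qed.

Lemma smooth_in_param_RInt_derive3 (d : R) (h : R -> R -> R) : smooth_in_param 3 d h ->
  exists R1 R2 R3 : R -> R,
    (forall s, -d < s < d -> is_derive (fun z => RInt (h z) 0 1) s (R1 s)) /\
    (forall s, -d < s < d -> is_derive R1 s (R2 s)) /\
    (forall s, -d < s < d -> is_derive R2 s (R3 s)).
Proof.
  intros H3. destruct (smooth_in_param_RInt _ _ _ H3) as [h1 [S1 D1]].
  destruct (smooth_in_param_RInt _ _ _ S1) as [h2 [S2 D2]].
  destruct (smooth_in_param_RInt _ _ _ S2) as [h3 [_ D3]].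
  exists (fun s => RInt (h1 s) 0 1), (fun s => RInt (h2 s) 0 1), (fun s => RInt (h3 s) 0 1).
  auto.
Qed.

Fixpoint PS_derive_iter (j : nat) (a : nat -> R) : nat -> R :=
  match j with O => a | S j' => PS_derive (PS_derive_iter j' a) end.

Lemma CV_radius_derive_iter j a : CV_radius (PS_derive_iter j a) = CV_radius a.
Proof. induction j; simpl; auto. rewrite CV_radius_derive; auto. Qed.

Lemma PS_derive_iter_zero j a k : a (k + j)%nat = 0 -> PS_derive_iter j a k = 0.
Proof.
  revert k; induction j as [|j IHj]; intros k Hk; simpl.
  - rewrite Nat.add_0_r in Hk; exact Hk.
  - unfold PS_derive. rewrite IHj; [ring|]. rewrite <- Hk. f_equal; lia.
Qed.

Lemma derivative_tower_PSeries a (r : R) : Rbar_le r (CV_radius a) ->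
  derivative_tower (fun j => PSeries (PS_derive_iter j a)) (-r) r.
Proof.
  intros Hr j x Hx. apply is_derive_PSeries.
  rewrite CV_radius_derive_iter. eapply Rbar_lt_le_trans; [|exact Hr].
  simpl. apply Rabs_def1; lra.
Qed.

Fixpoint falling_fact (q : R) (j : nat) : R :=
  match j with O => 1 | S j' => falling_fact q j' * (q - INR j') end.

Lemma derivative_tower_Rpower B q : 0 < B ->
  derivative_tower (fun j x => falling_fact q j * Rpower (B + x) (q - INR j)) (-B) B.
Proof.
  intros HB j x Hx. eapply is_derive_eq.
  - apply is_derive_scal with (f := fun x => Rpower (B + x) (q - INR j)).
    apply (is_derive_comp (fun y => Rpower y (q - INR j)) (fun x => B + x)).
    + apply is_derive_Reals, derivable_pt_lim_power. lra.
    + auto_derive; auto.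
  - rewrite S_INR. simpl. unfold scal; simpl. unfold mult; simpl.
    replace (q - (INR j + 1)) with (q - INR j - 1) by ring. ring.
Qed.

Lemma smooth_in_param_ext k d f g : (forall s t, f s t = g s t) ->
  smooth_in_param k d f -> smooth_in_param k d g.
Proof.
  intros Hfg. replace g with f; auto.
  apply functional_extensionality; intros s. apply functional_extensionality; auto.
Qed.

Lemma smooth_in_param_Rpower k d B q (c : R -> R) : 0 < B ->
  (forall t, 0 <= t <= 1 -> continuity_pt c t) ->
  (forall s t, -d < s < d -> -1/2 < t < 3/2 -> -B < s * c t < B) ->
  smooth_in_param k d (fun s t => Rpower (B + s * c t) q).
Proof.
  intros HB Hc Hd.
  apply (smooth_in_param_ext _ _
    (fun s t => falling_fact q 0 * Rpower (B + s * c t) (q - INR 0))).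
  - intros s t. simpl. rewrite Rminus_0_r. ring.
  - apply (smooth_in_param_comp k d (fun j x => falling_fact q j * Rpower (B + x) (q - INR j))
      c (-B) B); auto.
    apply derivative_tower_Rpower; auto.
Qed.

Lemma smooth_in_param_PSeries k d a (r : R) (c : R -> R) : Rbar_le r (CV_radius a) ->
  (forall t, 0 <= t <= 1 -> continuity_pt c t) ->
  (forall s t, -d < s < d -> -1/2 < t < 3/2 -> -r < s * c t < r) ->
  smooth_in_param k d (fun s t => PSeries a (s * c t)).
Proof.
  intros Hr Hc Hd.
  apply (smooth_in_param_comp k d (fun j => PSeries (PS_derive_iter j a)) c (-r) r); auto.
  apply derivative_tower_PSeries; auto.
Qed.

Definition right_derivative (f : R -> R) (x l : R) : Prop :=
  forall eps, 0 < eps -> exists d, 0 < d /\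
    forall h, 0 < h < d -> Rabs ((f (x + h) - f x) / h - l) < eps.

Lemma right_derivative_unique f x l1 l2 :
  right_derivative f x l1 -> right_derivative f x l2 -> l1 = l2.
Proof.
  intros H1 H2. destruct (Req_dec l1 l2) as [|Hne]; auto. exfalso.
  assert (He : 0 < Rabs (l1 - l2) / 2).
  { assert (l1 - l2 <> 0) by lra. apply Rabs_pos_lt in H. lra. }
  destruct (H1 _ He) as [d1 [Hd1 P1]]. destruct (H2 _ He) as [d2 [Hd2 P2]].
  set (h := Rmin d1 d2 / 2).
  assert (Hh : 0 < h < d1 /\ 0 < h < d2).
  { unfold h. pose proof (Rmin_l d1 d2). pose proof (Rmin_r d1 d2).
    assert (0 < Rmin d1 d2) by (apply Rmin_pos; auto). lra. }
  specialize (P1 h (proj1 Hh)). specialize (P2 h (proj2 Hh)).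
  set (z := (f (x + h) - f x) / h) in *.
  assert (Rabs (l1 - l2) <= Rabs (z - l1) + Rabs (z - l2)).
  { replace (l1 - l2) with (-(z - l1) + (z - l2)) by ring.
    eapply Rle_trans; [apply Rabs_triang|]. rewrite Rabs_Ropp. lra. }
  lra.
Qed.

Lemma RDeriv_eq f x l : right_derivative f x l -> RDeriv f x = l.
Proof.
  intros H. apply (right_derivative_unique f x); auto.
  apply (epsilon_spec (inhabits 0) (right_derivative f x)). exists l; exact H.
Qed.

Lemma right_derivative_of_is_derive f F x l r : 0 <= x < r ->
  (forall y, 0 <= y < r -> f y = F y) -> is_derive F x l -> right_derivative f x l.
Proof.
  intros Hx Hf HD eps Heps. apply is_derive_Reals in HD.
  destruct (HD eps Heps) as [del Hdel].
  exists (Rmin del (r - x)). split; [apply Rmin_pos; [apply cond_pos|lra]|].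
  intros h Hh. pose proof (Rmin_l del (r - x)). pose proof (Rmin_r del (r - x)).
  rewrite !Hf by lra. apply Hdel; [lra|]. rewrite Rabs_right; lra.
Qed.

Lemma RDerivn_PSeries f a (r : R) : Rbar_lt r (CV_radius a) ->
  (forall x, 0 <= x < r -> f x = PSeries a x) ->
  forall k x, 0 <= x < r -> RDerivn k f x = PSeries (PS_derive_iter k a) x.
Proof.
  intros Hr Hf k. induction k as [|k IHk]; intros x Hx; simpl; auto.
  apply RDeriv_eq, (right_derivative_of_is_derive _ (PSeries (PS_derive_iter k a)) x _ r); auto.
  apply is_derive_PSeries. rewrite CV_radius_derive_iter. eapply Rbar_lt_trans; [|exact Hr].
  simpl. rewrite Rabs_right; lra.
Qed.

Lemma bounded_of_Un_cv_0 (u : nat -> R) : Un_cv u 0 -> exists M, forall n, Rabs (u n) <= M.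
Proof.
  intros H. assert (H' : Un_cv (fun n => Rabs (u n)) 0).
  { intros eps He. destruct (H eps He) as [N HN]. exists N. intros n Hn.
    specialize (HN n Hn). unfold R_dist in *. rewrite Rminus_0_r in *.
    rewrite Rabs_Rabsolu; auto. }
  destruct (cauchy_maj _ (CV_Cauchy _ (exist _ 0 H'))) as [M HM].
  exists M. intros n. apply HM. exists n; auto.
Qed.

Lemma analytic_on_01_PSeries phi : analytic_on_01 phi ->
  exists (a : nat -> R) (r : R), 0 < r <= 1 /\ Rbar_lt r (CV_radius a) /\
    forall x, 0 <= x <= r -> phi x = PSeries a x.
Proof.
  intros Han. destruct (Han 0) as [a [r [Hr Ha]]]; [lra|].
  assert (Hsum : forall x, 0 <= x <= 1 -> x < r -> is_series (fun k => a k * x ^ k) (phi x)).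
  { intros x Hx Hxr. apply is_series_Reals.
    replace (fun k => a k * x ^ k) with (fun k => a k * (x - 0) ^ k)
      by (apply functional_extensionality; intros; rewrite Rminus_0_r; auto).
    apply Ha; [lra|]. rewrite Rminus_0_r, Rabs_right; lra. }
  set (x1 := Rmin r 1 / 2).
  assert (Hx1 : 0 < x1 /\ x1 <= 1 /\ x1 < r).
  { unfold x1. pose proof (Rmin_l r 1). pose proof (Rmin_r r 1).
    assert (0 < Rmin r 1) by (apply Rmin_pos; lra). lra. }
  assert (Hrad : Rbar_le x1 (CV_radius a)).
  { apply (proj1 (CV_radius_bounded a)), bounded_of_Un_cv_0, is_lim_seq_Reals.
    apply ex_series_lim_0. exists (phi x1). apply Hsum; lra. }
  exists a, (x1 / 2). split; [lra|]. split.
  - eapply Rbar_lt_le_trans; [|exact Hrad]. simpl; lra.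
  - intros x Hx. symmetry. apply is_series_unique, Hsum; lra.
Qed.

Lemma first_nonzero_coef (a : nat -> R) n : a n <> 0 ->
  exists m, (m <= n)%nat /\ a m <> 0 /\ forall k, (k < m)%nat -> a k = 0.
Proof.
  intros Han.
  assert (H : (forall k, (k <= n)%nat -> a k = 0) \/
              exists m, (m <= n)%nat /\ a m <> 0 /\ forall k, (k < m)%nat -> a k = 0).
  { clear Han. induction n as [|n [Hz|[m [Hm Hrest]]]].
    - destruct (Req_dec (a O) 0) as [H0|H0].
      + left. intros k Hk. replace k with O by lia. exact H0.
      + right. exists O. split; [lia|]. split; [exact H0|]. intros; lia.
    - destruct (Req_dec (a (S n)) 0) as [HS|HS].
      + left. intros k Hk. destruct (Nat.eq_dec k (S n)) as [->|]; auto. apply Hz; lia.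
      + right. exists (S n). split; [lia|]. split; [exact HS|]. intros k Hk; apply Hz; lia.
    - right. exists m. split; [lia|exact Hrest]. }
  destruct H as [Hz|Hm]; [|exact Hm]. exfalso. apply Han, Hz; lia.
Qed.

Lemma CV_radius_decr_n (a : nat -> R) m : CV_radius (PS_decr_n a m) = CV_radius a.
Proof.
  induction m as [|m IHm].
  - apply CV_radius_ext. intros k; reflexivity.
  - rewrite <- IHm, <- (CV_radius_decr_1 (PS_decr_n a m)).
    apply CV_radius_ext. intros k. unfold PS_decr_n, PS_decr_1. f_equal; lia.
Qed.

Lemma continuity_pt_nonneg_at_0 (f : R -> R) r : 0 < r -> continuity_pt f 0 ->
  (forall x, 0 < x <= r -> 0 <= f x) -> 0 <= f 0.
Proof.
  intros Hr Hc Hf. apply Rnot_lt_le. intros Hneg.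
  destruct (Hc (- f 0) ltac:(lra)) as [del [Hdel Hd]].
  set (y := Rmin del r / 2).
  assert (Hy : 0 < y /\ y < del /\ y <= r).
  { unfold y. pose proof (Rmin_l del r). pose proof (Rmin_r del r).
    assert (0 < Rmin del r) by (apply Rmin_pos; lra). lra. }
  assert (Hfy : Rabs (f y - f 0) < - f 0).
  { apply Hd. split; [split; [exact I|lra]|]. simpl. unfold R_dist.
    rewrite Rminus_0_r, Rabs_right; lra. }
  apply Rabs_def2 in Hfy. specialize (Hf y ltac:(lra)). lra.
Qed.

(* Only [phi^(n)(0) > 0] is used, not the vanishing of the lower derivatives. *)
Lemma standing_phi_local_form phi n : standing_phi phi n ->
  exists (m : nat) (b : nat -> R) (r : R), (m <= n)%nat /\ 0 < r /\
    Rbar_lt r (CV_radius b) /\ 0 < b O /\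
    forall x, 0 <= x <= r -> phi x = x ^ m * PSeries b x.
Proof.
  intros [Hpos [_ [Han [_ Hn]]]].
  destruct (analytic_on_01_PSeries phi Han) as [a [r [Hr [Hcv Hphi]]]].
  assert (Han0 : a n <> 0).
  { intros Hz. rewrite (RDerivn_PSeries phi a r Hcv ltac:(intros; apply Hphi; lra) n 0)
      in Hn by lra.
    rewrite PSeries_0, PS_derive_iter_zero in Hn; [lra|exact Hz]. }
  destruct (first_nonzero_coef a n Han0) as [m [Hmn [Ham Hz]]].
  assert (Hform : forall x, 0 <= x <= r -> phi x = x ^ m * PSeries (PS_decr_n a m) x).
  { intros x Hx. rewrite Hphi by exact Hx. apply PSeries_decr_n_aux, Hz. }
  exists m, (PS_decr_n a m), r. rewrite CV_radius_decr_n.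
  split; [exact Hmn|]. split; [apply Hr|]. split; [exact Hcv|]. split; [|exact Hform].
  assert (Hb0 : PS_decr_n a m O = a m) by (unfold PS_decr_n; f_equal; lia).
  rewrite Hb0. enough (Hge : 0 <= a m) by (destruct Hge; [auto|congruence]).
  rewrite <- Hb0, <- PSeries_0. apply (continuity_pt_nonneg_at_0 _ r (proj1 Hr)).
  - apply PSeries_continuity. rewrite CV_radius_decr_n, Rabs_R0.
    eapply Rbar_le_lt_trans; [|exact Hcv]. simpl; lra.
  - intros x Hx. assert (Hxm : 0 < x ^ m) by (apply pow_lt; lra).
    assert (0 <= phi x) by (apply Hpos; lra). rewrite Hform in H by lra.
    apply (Rmult_le_reg_l (x ^ m)); [exact Hxm|]. lra.
Qed.

(* With [phi x = x ^ m * PSeries b x], the substitution [E = E0 - s + s y] turns the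
   integrals defining [rho] and [p] at [V = E0 - s] into [s ^ (m + 3/2)] resp.
   [s ^ (m + 5/2)] times the integrals over [y] in [0, 1] of these integrands. *)
Definition rho_integrand (E0 : R) (m : nat) (b : nat -> R) (s y : R) : R :=
  4 * PI * ((1 - y) / E0) ^ m * sqrt y * PSeries b (s * ((1 - y) / E0))
  * Rpower (E0 + s * (y - 1)) 2 * Rpower (2 * E0 + s * (y - 2)) (/ 2)
  * Rpower (E0 - s) (-4).

Definition p_integrand (E0 : R) (m : nat) (b : nat -> R) (s y : R) : R :=
  4 * PI / 3 * ((1 - y) / E0) ^ m * y * sqrt y * PSeries b (s * ((1 - y) / E0))
  * Rpower (2 * E0 + s * (y - 2)) (3 / 2) * Rpower (E0 - s) (-4).

Definition rescale_width (E0 r : R) : R := Rmin (E0 / 4) (r * E0 / 2).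

Section Integrands.
Variables (E0 : R) (m : nat) (b : nat -> R) (r : R).
Hypothesis HE0 : 0 < E0.
Hypothesis Hr : 0 < r.
Hypothesis Hcv : Rbar_lt r (CV_radius b).

Local Notation d := (rescale_width E0 r).

Lemma rescale_width_spec : 0 < d /\ d <= E0 / 4 /\ d <= r * E0 / 2.
Proof.
  unfold d, rescale_width. split; [|split; [apply Rmin_l|apply Rmin_r]].
  apply Rmin_pos; [lra|]. apply Rmult_lt_0_compat; [apply Rmult_lt_0_compat|]; lra.
Qed.

Lemma affine_arg_bound s t K B (c : R -> R) : 0 < K -> d * K <= B -> -d < s < d ->
  (-1/2 < t < 3/2 -> -K < c t < K) -> -1/2 < t < 3/2 -> -B < s * c t < B.
Proof.
  intros HK HdK Hs Hc Ht. specialize (Hc Ht). pose proof rescale_width_spec.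
  split; nra.
Qed.

Lemma smooth_psi k : smooth_in_param k d (fun s y => PSeries b (s * ((1 - y) / E0))).
Proof.
  pose proof rescale_width_spec as [Hd0 [_ Hd2]].
  apply (smooth_in_param_PSeries k d b r); [apply Rbar_lt_le, Hcv|intros; reg|].
  intros s t Hs Ht. apply (affine_arg_bound s t (3 / 2 / E0) r (fun y => (1 - y) / E0)); auto.
  - apply Rdiv_lt_0_compat; lra.
  - apply Rle_trans with (r * E0 / 2 * (3 / 2 / E0)).
    + apply Rmult_le_compat_r; [|exact Hd2]. left; apply Rdiv_lt_0_compat; lra.
    + replace (r * E0 / 2 * (3 / 2 / E0)) with (3 / 4 * r) by (field; lra). lra.
  - intros. split; apply Rmult_lt_reg_r with E0; auto; unfold Rdiv; field_simplify; lra.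
Qed.

Lemma smooth_Rpower_affine k B q a0 K : 0 < B -> 0 < K -> d * K <= B ->
  (forall t, -1/2 < t < 3/2 -> -K < t - a0 < K) ->
  smooth_in_param k d (fun s y => Rpower (B + s * (y - a0)) q).
Proof.
  intros HB HK HdK Hc.
  apply (smooth_in_param_Rpower k d B q (fun y => y - a0)); auto; [intros; reg|].
  intros s t Hs Ht. apply (affine_arg_bound s t K B (fun y => y - a0)); auto.
Qed.

Lemma smooth_Rpower_E0_minus k q : smooth_in_param k d (fun s _ => Rpower (E0 - s) q).
Proof.
  pose proof rescale_width_spec as [Hd0 [Hd1 _]].
  apply (smooth_in_param_ext _ _ (fun s t => Rpower (E0 + s * (fun _ => -1) t) q)).
  - intros s t. f_equal. ring.
  - apply (smooth_in_param_Rpower k d E0 q (fun _ => -1)); auto; [intros; reg|].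
    intros s t Hs Ht. apply (affine_arg_bound s t 2 E0 (fun _ => -1)); auto; lra.
Qed.

Ltac smooth_in_param_auto :=
  first [ apply smooth_psi | apply smooth_Rpower_E0_minus
        | (apply (smooth_Rpower_affine _ E0 _ 1 (3/2))
           || apply (smooth_Rpower_affine _ (2 * E0) _ 2 (5/2)));
          pose proof rescale_width_spec; intros; lra
        | (apply smooth_in_param_const; intros;
           first [apply continuity_pt_sqrt; lra | reg; lra | reg])
        | (apply smooth_in_param_mult; smooth_in_param_auto) ].

Lemma smooth_rho_integrand k : smooth_in_param k d (rho_integrand E0 m b).
Proof. unfold rho_integrand. smooth_in_param_auto. Qed.

Lemma smooth_p_integrand k : smooth_in_param k d (p_integrand E0 m b).
Proof. unfold p_integrand. smooth_in_param_auto. Qed.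

Lemma smooth_in_param_RInt_pos h : smooth_in_param 0 d h ->
  (forall y, 0 < y < 1 -> 0 < h 0 y) -> 0 < RInt (h 0) 0 1.
Proof.
  intros Hh Hpos. pose proof rescale_width_spec as [Hd0 _].
  apply RInt_gt_0; [lra|exact Hpos|].
  intros y Hy. apply continuity_2d_pt_continuous_snd, (smooth_in_param_cont _ _ _ Hh); lra.
Qed.

Ltac positivity_at_0 :=
  intros y Hy; rewrite Rmult_0_l, PSeries_0;
  (* [PI] is itself a product, [2 * PI2]: hide it from [Rmult_lt_0_compat]. *)
  pose proof PI_RGT_0; set (pi := PI) in *; clearbody pi;
  repeat apply Rmult_lt_0_compat;
  first [ unfold Rpower; apply exp_pos | lra | apply sqrt_lt_R0; lra
        | apply pow_lt, Rdiv_lt_0_compat; lra ].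

Lemma RInt_rho_integrand_0_pos : 0 < b O -> 0 < RInt (rho_integrand E0 m b 0) 0 1.
Proof.
  intros Hb0. apply smooth_in_param_RInt_pos; [apply smooth_rho_integrand|].
  unfold rho_integrand. positivity_at_0.
Qed.

Lemma RInt_p_integrand_0_pos : 0 < b O -> 0 < RInt (p_integrand E0 m b 0) 0 1.
Proof.
  intros Hb0. apply smooth_in_param_RInt_pos; [apply smooth_p_integrand|].
  unfold p_integrand. positivity_at_0.
Qed.

End Integrands.

Lemma Defs_RInt_eq_RInt f a b : ex_RInt f a b -> Defs.RInt f a b = RInt f a b.
Proof.
  intros H. pose proof (ex_RInt_Reals_0 _ _ _ H) as pr.
  unfold Defs.RInt.
  destruct (epsilon_spec (inhabits 0)
    (fun l => exists pr : Riemann_integrable f a b, RiemannInt pr = l))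
    as [pr' Hpr']; [exists (RiemannInt pr), pr; reflexivity|].
  rewrite <- Hpr'. symmetry. apply RInt_Reals.
Qed.

Lemma RInt_affine_subst (F H : R -> R) (c s V : R) : 0 < s -> c <> 0 -> ex_RInt H 0 1 ->
  (forall y, 0 < y < 1 -> c * (s * F (s * y + V)) = H y) ->
  c * Defs.RInt F V (s + V) = RInt H 0 1.
Proof.
  intros Hs Hc HH Hpt.
  set (G := fun y => s * F (s * y + V)).
  assert (HG : ex_RInt G 0 1).
  { apply (ex_RInt_ext (fun y => / c * H y)).
    - rewrite Rmin_left, Rmax_right by lra. intros y Hy. unfold G.
      rewrite <- Hpt by exact Hy.
      change (/ c * (c * (s * F (s * y + V))) = s * F (s * y + V)). field; auto.
    - apply (ex_RInt_scal (V := R_NormedModule) H 0 1 (/ c)); auto. }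
  assert (HF : ex_RInt F V (s + V)).
  { assert (H1 := ex_RInt_comp_lin G (/ s) (- V / s) V (s + V)).
    replace (/ s * V + - V / s) with 0 in H1 by (field; lra).
    replace (/ s * (s + V) + - V / s) with 1 in H1 by (field; lra).
    specialize (H1 HG). revert H1. apply ex_RInt_ext.
    intros x _. unfold G.
    change (/ s * (s * F (s * (/ s * x + - V / s) + V)) = F x).
    replace (s * (/ s * x + - V / s) + V) with x by (field; lra). field; lra. }
  rewrite Defs_RInt_eq_RInt by exact HF.
  assert (H2 := RInt_comp_lin F s V 0 1).
  replace (s * 0 + V) with V in H2 by ring. replace (s * 1 + V) with (s + V) in H2 by ring.
  rewrite <- (H2 HF).
  transitivity (RInt (fun y => c * G y) 0 1).
  { symmetry. apply (RInt_scal (V := R_CompleteNormedModule) G 0 1 c HG). }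
  apply RInt_ext. rewrite Rmin_left, Rmax_right by lra. intros y Hy. apply Hpt; exact Hy.
Qed.

Lemma sqrt_rescaled_ratio V s y : 0 < V -> 0 <= s -> 0 <= y ->
  sqrt (((s * y + V) / V) ^ 2 - 1) = sqrt s * sqrt y * sqrt (2 * V + s * y) / V.
Proof.
  intros HV Hs Hy.
  replace (((s * y + V) / V) ^ 2 - 1) with (s * y * (2 * V + s * y) / (V * V)) by (field; lra).
  rewrite sqrt_div_alt by nra. rewrite sqrt_square by lra.
  rewrite !sqrt_mult_alt by nra. reflexivity.
Qed.

Lemma Rpower_2 x : 0 < x -> Rpower x 2 = x ^ 2.
Proof. intros Hx. replace 2 with (INR 2) at 1 by (simpl; lra). apply Rpower_pow, Hx. Qed.

Lemma Rpower_neg4 x : 0 < x -> Rpower x (-4) = / x ^ 4.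
Proof.
  intros Hx. replace (-4) with (- INR 4) by (simpl; lra).
  rewrite Rpower_Ropp, Rpower_pow; auto.
Qed.

Lemma Rpower_3_2 x : 0 < x -> Rpower x (3 / 2) = sqrt x ^ 3.
Proof.
  intros Hx. replace (3 / 2) with (INR 1 + / 2) by (simpl; lra).
  rewrite Rpower_plus, Rpower_pow, Rpower_sqrt by exact Hx.
  rewrite <- (sqrt_sqrt x) at 1 by lra. ring.
Qed.

Definition spow (m : nat) (s : R) : R := s ^ S m * sqrt s.

Lemma spow_pos m s : 0 < s -> 0 < spow m s.
Proof. intros Hs. apply Rmult_lt_0_compat; [apply pow_lt|apply sqrt_lt_R0]; exact Hs. Qed.

Section Rescaling.
Variables (E0 : R) (m : nat) (b : nat -> R) (r : R) (phi : R -> R).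
Hypothesis HE0 : 0 < E0.
Hypothesis Hr : 0 < r.
Hypothesis Hcv : Rbar_lt r (CV_radius b).
Hypothesis Hphi : forall x, 0 <= x <= r -> phi x = x ^ m * PSeries b x.

Local Notation d := (rescale_width E0 r).

Lemma phi_rescaled s y : 0 < s < d -> 0 < y < 1 ->
  phi (1 - (s * y + (E0 - s)) / E0)
  = s ^ m * (((1 - y) / E0) ^ m * PSeries b (s * ((1 - y) / E0))).
Proof.
  intros Hs Hy. pose proof (rescale_width_spec E0 r HE0 Hr) as [_ [_ Hd2]].
  replace (1 - (s * y + (E0 - s)) / E0) with (s * ((1 - y) / E0)) by (field; lra).
  rewrite Hphi, Rpow_mult_distr; [ring|]. split.
  - apply Rmult_le_pos; [lra|]. apply Rdiv_le_0_compat; lra.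
  - apply Rle_trans with (d * (1 / E0)).
    + apply Rmult_le_compat; try lra.
      * apply Rdiv_le_0_compat; lra.
      * unfold Rdiv. apply Rmult_le_compat_r; [left; apply Rinv_0_lt_compat|]; lra.
    + apply Rle_trans with (r * E0 / 2 * (1 / E0)).
      * apply Rmult_le_compat_r; [left; apply Rdiv_lt_0_compat|]; lra.
      * replace (r * E0 / 2 * (1 / E0)) with (r / 2) by (field; lra). lra.
Qed.

Lemma rho_rescaled s : 0 < s < d ->
  rho phi E0 (E0 - s) = spow m s * RInt (rho_integrand E0 m b s) 0 1.
Proof.
  intros Hs. pose proof (rescale_width_spec E0 r HE0 Hr) as [Hd0 [Hd1 _]].
  assert (Hex : ex_RInt (rho_integrand E0 m b s) 0 1).
  { apply (smooth_in_param_ex_RInt 0 d); [apply smooth_rho_integrand; auto|lra]. }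
  unfold rho.
  set (F := fun E => phi (1 - E / E0) * E ^ 2 * sqrt ((E / (E0 - s)) ^ 2 - 1)).
  replace (Defs.RInt F (E0 - s) E0) with (Defs.RInt F (E0 - s) (s + (E0 - s))) by (f_equal; ring).
  rewrite (RInt_affine_subst _ (fun y => spow m s * rho_integrand E0 m b s y)).
  - apply (RInt_scal (V := R_CompleteNormedModule)), Hex.
  - lra.
  - apply Rgt_not_eq, Rdiv_lt_0_compat; [pose proof PI_RGT_0; lra|apply pow_lt; lra].
  - apply (ex_RInt_scal (V := R_NormedModule)), Hex.
  - intros y Hy. unfold F. rewrite phi_rescaled by assumption.
    rewrite sqrt_rescaled_ratio by lra.
    unfold rho_integrand, spow.
    replace (2 * (E0 - s) + s * y) with (2 * E0 + s * (y - 2)) by ring.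
    replace (E0 + s * (y - 1)) with (s * y + (E0 - s)) by ring.
    rewrite Rpower_2, Rpower_sqrt, Rpower_neg4 by nra.
    simpl pow. field. lra.
Qed.

Lemma p_rescaled s : 0 < s < d ->
  pr phi E0 (E0 - s) = spow m s * s * RInt (p_integrand E0 m b s) 0 1.
Proof.
  intros Hs. pose proof (rescale_width_spec E0 r HE0 Hr) as [Hd0 [Hd1 _]].
  assert (Hex : ex_RInt (p_integrand E0 m b s) 0 1).
  { apply (smooth_in_param_ex_RInt 0 d); [apply smooth_p_integrand; auto|lra]. }
  unfold pr.
  set (F := fun E => phi (1 - E / E0) * sqrt ((E / (E0 - s)) ^ 2 - 1) ^ 3).
  replace (Defs.RInt F (E0 - s) E0) with (Defs.RInt F (E0 - s) (s + (E0 - s))) by (f_equal; ring).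
  rewrite (RInt_affine_subst _ (fun y => spow m s * s * p_integrand E0 m b s y)).
  - apply (RInt_scal (V := R_CompleteNormedModule)), Hex.
  - lra.
  - apply Rgt_not_eq, Rdiv_lt_0_compat; pose proof PI_RGT_0; lra.
  - apply (ex_RInt_scal (V := R_NormedModule)), Hex.
  - intros y Hy. unfold F. rewrite phi_rescaled by assumption.
    rewrite sqrt_rescaled_ratio by lra.
    unfold p_integrand, spow.
    replace (2 * (E0 - s) + s * y) with (2 * E0 + s * (y - 2)) by ring.
    rewrite Rpower_3_2, Rpower_neg4 by nra.
    set (q := sqrt (2 * E0 + s * (y - 2))).
    replace ((sqrt s * sqrt y * q / (E0 - s)) ^ 3) with
      ((sqrt s * sqrt s) * sqrt s * ((sqrt y * sqrt y) * sqrt y) * q ^ 3 / (E0 - s) ^ 3)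
      by (field; lra).
    rewrite !sqrt_sqrt by lra. simpl pow. field. lra.
Qed.

End Rescaling.

Lemma continuity_pt_gt_near (h : R -> R) c : continuity_pt h 0 -> c < h 0 ->
  exists del, 0 < del /\ forall s, -del < s < del -> c < h s.
Proof.
  intros Hc Hh. destruct (Hc (h 0 - c)) as [del [Hdel Hd']]; [lra|].
  exists del. split; [exact Hdel|]. intros s Hs.
  destruct (Req_dec s 0) as [->|Hne]; [exact Hh|].
  assert (Hx : Rabs (h s - h 0) < h 0 - c).
  { apply Hd'. split; [split; [exact I|auto]|]. simpl. unfold R_dist.
    rewrite Rminus_0_r. apply Rabs_def1; lra. }
  apply Rabs_def2 in Hx. lra.
Qed.

Lemma Rdiv_opp_opp a b : - a / - b = a / b.
Proof. unfold Rdiv. rewrite Rinv_opp. ring. Qed.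

Lemma Deriv_eq (h : R -> R) (x l : R) : derivable_pt_lim h x l -> Deriv h x = l.
Proof.
  intros H. unfold Deriv. eapply uniqueness_limite; [|exact H].
  apply (epsilon_spec (inhabits 0) (derivable_pt_lim h x)). exists l; exact H.
Qed.

Lemma Deriv_reflect (u h : R -> R) (E0 d V l : R) : E0 - d < V < E0 ->
  (forall V', E0 - d < V' < E0 -> u V' = h (E0 - V')) ->
  is_derive h (E0 - V) l -> Deriv u V = - l.
Proof.
  intros HV Hu Hh. apply Deriv_eq, is_derive_Reals.
  apply (is_derive_ext_loc (fun V' => h (E0 - V'))).
  - apply (locally_interval _ V (E0 - d) E0); simpl; try lra.
    intros y H1 H2. symmetry. apply Hu. simpl in *; lra.
  - eapply is_derive_eq.
    + apply (is_derive_comp h (fun V' => E0 - V')); [exact Hh|]. auto_derive; auto.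
    + simpl. unfold scal; simpl. unfold mult; simpl. ring.
Qed.

Lemma is_derive_spow m s : 0 < s -> is_derive (spow m) s ((INR m + 3 / 2) * spow m s / s).
Proof.
  intros Hs. unfold spow.
  assert (Hq : 0 < sqrt s) by (apply sqrt_lt_R0; exact Hs).
  assert (Hq2 : sqrt s * sqrt s = s) by (apply sqrt_sqrt; lra).
  eapply is_derive_eq.
  - apply is_derive_Rmult.
    + apply is_derive_Reals, derivable_pt_lim_pow.
    + apply is_derive_Reals, derivable_pt_lim_sqrt, Hs.
  - rewrite S_INR. simpl pow. simpl Nat.pred.
    replace (s * s ^ m * / (2 * sqrt s)) with ((sqrt s * sqrt s) * s ^ m / (2 * sqrt s))
      by (rewrite Hq2; field; lra).
    field. lra.
Qed.

Section Scaled_I.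
Variables (m : nat) (d : R) (f f' f'' g g' g'' : R -> R).
Hypothesis Hf' : forall s, -d < s < d -> is_derive f s (f' s).
Hypothesis Hf'' : forall s, -d < s < d -> is_derive f' s (f'' s).
Hypothesis Hg' : forall s, -d < s < d -> is_derive g s (g' s).
Hypothesis Hg'' : forall s, -d < s < d -> is_derive g' s (g'' s).

Local Notation a := (INR m + 3 / 2).

(* [rho] and [p] at [V = E0 - s], as functions of [s], and their [s]-derivatives. *)
Definition rhos s := spow m s * f s.
Definition rhos' s := spow m s / s * (a * f s + s * f' s).
Definition rhos'' s := spow m s / s ^ 2 * (a * (a - 1) * f s + 2 * a * s * f' s + s ^ 2 * f'' s).
Definition ps s := spow m s * s * g s.
Definition ps' s := spow m s * ((a + 1) * g s + s * g' s).
Definition ps'' s := spow m s / s * ((a + 1) * a * g s + 2 * (a + 1) * s * g' s + s ^ 2 * g'' s).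

Lemma is_derive_rhos s : 0 < s < d -> is_derive rhos s (rhos' s).
Proof.
  intros Hs. eapply is_derive_eq.
  - apply is_derive_Rmult; [apply is_derive_spow|apply Hf']; lra.
  - unfold rhos'. field. lra.
Qed.

Lemma is_derive_rhos' s : 0 < s < d -> is_derive rhos' s (rhos'' s).
Proof.
  intros Hs. eapply is_derive_eq.
  - apply (is_derive_Rmult (fun s => spow m s / s) (fun s => a * f s + s * f' s)).
    + apply is_derive_div; [apply is_derive_spow; lra|apply is_derive_id_R|lra].
    + apply is_derive_Rplus; [apply (is_derive_scal f), Hf'; lra|].
      apply is_derive_Rmult; [apply is_derive_id_R|apply Hf''; lra].
  - unfold rhos''. field. lra.
Qed.

Lemma is_derive_ps s : 0 < s < d -> is_derive ps s (ps' s).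
Proof.
  intros Hs. eapply is_derive_eq.
  - apply (is_derive_Rmult (fun s => spow m s * s) g); [|apply Hg'; lra].
    apply is_derive_Rmult; [apply is_derive_spow; lra|apply is_derive_id_R].
  - unfold ps'. field. lra.
Qed.

Lemma is_derive_ps' s : 0 < s < d -> is_derive ps' s (ps'' s).
Proof.
  intros Hs. eapply is_derive_eq.
  - apply (is_derive_Rmult (spow m) (fun s => (a + 1) * g s + s * g' s));
      [apply is_derive_spow; lra|].
    apply is_derive_Rplus; [apply (is_derive_scal g), Hg'; lra|].
    apply is_derive_Rmult; [apply is_derive_id_R|apply Hg''; lra].
  - unfold ps''. field. lra.
Qed.

Definition kappas s := (rhos s + ps s) / (rhos s + 3 * ps s) * (rhos' s / ps' s).
Definition kappas' s :=
  ((rhos' s + ps' s) * (rhos s + 3 * ps s) - (rhos s + ps s) * (rhos' s + 3 * ps' s))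
    / (rhos s + 3 * ps s) ^ 2 * (rhos' s / ps' s)
  + (rhos s + ps s) / (rhos s + 3 * ps s) * ((rhos'' s * ps' s - rhos' s * ps'' s) / ps' s ^ 2).

Lemma is_derive_kappas s : 0 < s < d -> rhos s + 3 * ps s <> 0 -> ps' s <> 0 ->
  is_derive kappas s (kappas' s).
Proof.
  intros Hs H1 H2. eapply is_derive_eq.
  - apply (is_derive_Rmult (fun s => (rhos s + ps s) / (rhos s + 3 * ps s))
      (fun s => rhos' s / ps' s)).
    + apply is_derive_div; auto.
      * apply is_derive_Rplus; [apply is_derive_rhos|apply is_derive_ps]; auto.
      * apply is_derive_Rplus; [apply is_derive_rhos|]; auto.
        apply (is_derive_scal ps), is_derive_ps; auto.
    + apply is_derive_div; [apply is_derive_rhos'|apply is_derive_ps'|]; auto.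
  - reflexivity.
Qed.

(* [s ^ 2 * I(E0 - s)] after cancelling the common powers of [s]; it has a finite limit at 0. *)
Definition s2I (s : R) : R :=
  let k := (f s + s * g s) * (a * f s + s * f' s) /
           ((f s + 3 * s * g s) * ((a + 1) * g s + s * g' s)) in
  k ^ 2 / 5 + 2 * s * k
  + (f s + s * g s) / ((a + 1) * g s + s * g' s) *
    ((((a * f s + s * f' s) + s * ((a + 1) * g s + s * g' s)) * (f s + 3 * s * g s)
       - (f s + s * g s) * ((a * f s + s * f' s) + 3 * s * ((a + 1) * g s + s * g' s)))
       / (f s + 3 * s * g s) ^ 2 * ((a * f s + s * f' s) / ((a + 1) * g s + s * g' s))
     + (f s + s * g s) / (f s + 3 * s * g s) *
       (((a * (a - 1) * f s + 2 * a * s * f' s + s ^ 2 * f'' s) * ((a + 1) * g s + s * g' s)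
         - (a * f s + s * f' s) * ((a + 1) * a * g s + 2 * (a + 1) * s * g' s + s ^ 2 * g'' s))
        / ((a + 1) * g s + s * g' s) ^ 2)).

Lemma s2I_spec s : 0 < s -> f s + 3 * s * g s <> 0 -> (a + 1) * g s + s * g' s <> 0 ->
  s ^ 2 * (/ 5 * kappas s ^ 2 + 2 * kappas s + (rhos s + ps s) * (kappas' s / ps' s)) = s2I s.
Proof.
  intros Hs HD HG. pose proof (spow_pos m s Hs) as HP.
  unfold s2I, kappas, kappas', rhos, ps, rhos', ps', rhos'', ps''.
  field. repeat split; try assumption; try lra.
  replace (spow m s * f s + 3 * (spow m s * s * g s))
    with (spow m s * (f s + 3 * s * g s)) by ring.
  apply Rmult_integral_contrapositive; split; [lra|assumption].
Qed.

Lemma s2I_0 : 0 < f 0 -> 0 < g 0 ->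
  s2I 0 = a * f 0 ^ 2 / ((a + 1) ^ 2 * g 0 ^ 2) * (a / 5 - 1).
Proof.
  intros H1 H2. assert (Ha : 0 < a) by (pose proof (pos_INR m); lra).
  unfold s2I. field. repeat split; nra.
Qed.

(* The only place where [n <= 3] enters: [a = m + 3/2 < 5]. *)
Lemma s2I_0_neg : (m <= 3)%nat -> 0 < f 0 -> 0 < g 0 -> s2I 0 < 0.
Proof.
  intros Hm H1 H2. rewrite s2I_0 by assumption.
  assert (Ha : 0 < a) by (pose proof (pos_INR m); lra).
  assert (Ha5 : a < 5) by (apply le_INR in Hm; simpl in Hm; lra).
  assert (0 < a * f 0 ^ 2 / ((a + 1) ^ 2 * g 0 ^ 2)).
  { apply Rdiv_lt_0_compat; [apply Rmult_lt_0_compat; [lra|apply pow_lt; lra]|].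
    apply Rmult_lt_0_compat; apply pow_lt; lra. }
  nra.
Qed.

Variables (f''' g''' : R -> R).
Hypothesis Hf''' : forall s, -d < s < d -> is_derive f'' s (f''' s).
Hypothesis Hg''' : forall s, -d < s < d -> is_derive g'' s (g''' s).
Hypothesis Hd : 0 < d.
Hypothesis Hf0 : 0 < f 0.
Hypothesis Hg0 : 0 < g 0.

Lemma ex_derive_at_0 (h h' : R -> R) :
  (forall s, -d < s < d -> is_derive h s (h' s)) -> ex_derive h 0.
Proof. intros Hh. exists (h' 0). apply Hh. lra. Qed.

Lemma continuity_s2I_0 : continuity_pt s2I 0.
Proof.
  assert (Ha : 0 < a) by (pose proof (pos_INR m); lra).
  apply continuity_pt_of_ex_derive. unfold s2I. cbv zeta. auto_derive.
  repeat split; try (eapply ex_derive_at_0; eauto; fail).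
  all: try (intro; nra).
  all: apply Rmult_integral_contrapositive; split; apply Rgt_not_eq; nra.
Qed.

Variables (E0 : R) (phi : R -> R).
Hypothesis Hrho : forall s, 0 < s < d -> rho phi E0 (E0 - s) = rhos s.
Hypothesis Hp : forall s, 0 < s < d -> pr phi E0 (E0 - s) = ps s.

Lemma Ifun_eq_s2I s : 0 < s < d ->
  f s + 3 * s * g s <> 0 -> (a + 1) * g s + s * g' s <> 0 ->
  Ifun phi E0 (E0 - s) = s2I s / s ^ 2.
Proof.
  intros Hs HD HG. pose proof (spow_pos m s (proj1 Hs)) as HP.
  assert (Hrho' : forall V, E0 - d < V < E0 -> rho phi E0 V = rhos (E0 - V)).
  { intros V HV. rewrite <- Hrho by lra. f_equal; ring. }
  assert (Hp' : forall V, E0 - d < V < E0 -> pr phi E0 V = ps (E0 - V)).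
  { intros V HV. rewrite <- Hp by lra. f_equal; ring. }
  assert (Hdrho : forall V, E0 - d < V < E0 -> Deriv (rho phi E0) V = - rhos' (E0 - V)).
  { intros V HV. apply (Deriv_reflect _ rhos E0 d); auto. apply is_derive_rhos. lra. }
  assert (Hdp : forall V, E0 - d < V < E0 -> Deriv (pr phi E0) V = - ps' (E0 - V)).
  { intros V HV. apply (Deriv_reflect _ ps E0 d); auto. apply is_derive_ps. lra. }
  assert (Hkappa : forall V, E0 - d < V < E0 -> kappa phi E0 V = kappas (E0 - V)).
  { intros V HV. unfold kappa, kappas. rewrite Hrho', Hp', Hdrho, Hdp by exact HV.
    rewrite Rdiv_opp_opp. reflexivity. }
  assert (Hden : rhos s + 3 * ps s <> 0).
  { unfold rhos, ps.
    replace (spow m s * f s + 3 * (spow m s * s * g s)) with (spow m s * (f s + 3 * s * g s))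
      by ring.
    apply Rmult_integral_contrapositive; split; [lra|exact HD]. }
  assert (Hps' : ps' s <> 0) by (apply Rmult_integral_contrapositive; split; [lra|exact HG]).
  assert (Hdkappa : Deriv (kappa phi E0) (E0 - s) = - kappas' s).
  { apply (Deriv_reflect _ kappas E0 d); [lra|exact Hkappa|].
    replace (E0 - (E0 - s)) with s by ring. apply is_derive_kappas; assumption. }
  unfold Ifun. rewrite Hdkappa, Hkappa, Hrho', Hp', Hdp by lra.
  replace (E0 - (E0 - s)) with s by ring.
  rewrite <- s2I_spec by (lra || assumption).
  rewrite Rdiv_opp_opp. field. split; [exact Hps'|lra].
Qed.

Lemma Ifun_below_inv_square : (m <= 3)%nat ->
  exists del c, 0 < del /\ c < 0 /\ forall s, 0 < s < del -> Ifun phi E0 (E0 - s) < c / s ^ 2.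
Proof.
  intros Hm. pose proof (s2I_0_neg Hm Hf0 Hg0) as Hneg.
  assert (Ha : 0 < a) by (pose proof (pos_INR m); lra).
  destruct (continuity_pt_gt_near (fun s => f s + 3 * s * g s) 0) as [e1 [He1 HD]].
  { apply continuity_pt_of_ex_derive. auto_derive.
    repeat split; eapply ex_derive_at_0; eauto. }
  { lra. }
  destruct (continuity_pt_gt_near (fun s => (a + 1) * g s + s * g' s) 0) as [e2 [He2 HG]].
  { apply continuity_pt_of_ex_derive. auto_derive.
    repeat split; eapply ex_derive_at_0; eauto. }
  { nra. }
  destruct (continuity_pt_gt_near (fun s => - s2I s) (- s2I 0 / 2)) as [e3 [He3 HI]].
  { apply continuity_pt_opp, continuity_s2I_0. }
  { lra. }
  pose proof (Rmin_l d (Rmin e1 (Rmin e2 e3))). pose proof (Rmin_r d (Rmin e1 (Rmin e2 e3))).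
  pose proof (Rmin_l e1 (Rmin e2 e3)). pose proof (Rmin_r e1 (Rmin e2 e3)).
  pose proof (Rmin_l e2 e3). pose proof (Rmin_r e2 e3).
  set (del := Rmin d (Rmin e1 (Rmin e2 e3))) in *.
  exists del, (s2I 0 / 2). split; [repeat apply Rmin_pos; lra|]. split; [lra|].
  intros s Hs. specialize (HD s ltac:(lra)). specialize (HG s ltac:(lra)).
  specialize (HI s ltac:(lra)). simpl in HD, HG, HI.
  rewrite Ifun_eq_s2I by (lra || (apply Rgt_not_eq; lra)).
  apply Rmult_lt_compat_r; [apply Rinv_0_lt_compat, pow_lt|]; lra.
Qed.

End Scaled_I.

Lemma Ifun_below_inv_square_near_E0 (E0 : R) (phi : R -> R) (n : nat) :
  0 < E0 -> standing_phi phi n -> (n <= 3)%nat ->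
  exists del c, 0 < del /\ c < 0 /\ forall s, 0 < s < del -> Ifun phi E0 (E0 - s) < c / s ^ 2.
Proof.
  intros HE0 Hphi Hn.
  destruct (standing_phi_local_form phi n Hphi) as [m [b [r [Hmn [Hr [Hcv [Hb0 Hform]]]]]]].
  pose proof (rescale_width_spec E0 r HE0 Hr) as [Hd _].
  destruct (smooth_in_param_RInt_derive3 _ _ (smooth_rho_integrand E0 m b r HE0 Hr Hcv 3))
    as [f' [f'' [f''' [Hf' [Hf'' Hf''']]]]].
  destruct (smooth_in_param_RInt_derive3 _ _ (smooth_p_integrand E0 m b r HE0 Hr Hcv 3))
    as [g' [g'' [g''' [Hg' [Hg'' Hg''']]]]].
  apply Ifun_below_inv_square with (m := m) (d := rescale_width E0 r)
    (f := fun s => RInt (rho_integrand E0 m b s) 0 1) (f' := f') (f'' := f'') (f''' := f''')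
    (g := fun s => RInt (p_integrand E0 m b s) 0 1) (g' := g') (g'' := g'') (g''' := g''');
    try assumption.
  - apply RInt_rho_integrand_0_pos with r; assumption.
  - apply RInt_p_integrand_0_pos with r; assumption.
  - intros s Hs. apply (rho_rescaled E0 m b r phi); assumption.
  - intros s Hs. apply (p_rescaled E0 m b r phi); assumption.
  - lia.
Qed.

Lemma inv_square_below (c del M : R) : c < 0 -> 0 < del ->
  exists s0, 0 < s0 < del /\ forall s, 0 < s <= s0 -> c / s ^ 2 < M.
Proof.
  intros Hc Hdel. set (M' := Rmin M (-1)).
  pose proof (Rmin_l M (-1)) as HM1. pose proof (Rmin_r M (-1)) as HM2. fold M' in HM1, HM2.
  assert (Hq : 0 < c / M') by (apply Rdiv_neg_neg; lra).
  exists (Rmin (del / 2) (Rmin 1 (c / M' / 2))).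
  pose proof (Rmin_l (del / 2) (Rmin 1 (c / M' / 2))).
  pose proof (Rmin_r (del / 2) (Rmin 1 (c / M' / 2))).
  pose proof (Rmin_l 1 (c / M' / 2)). pose proof (Rmin_r 1 (c / M' / 2)).
  assert (0 < Rmin (del / 2) (Rmin 1 (c / M' / 2))) by (repeat apply Rmin_pos; lra).
  split; [lra|]. intros s Hs.
  assert (Hs2 : 0 < s ^ 2) by (apply pow_lt; lra).
  assert (Hsq : s ^ 2 < c / M') by (simpl; nra).
  assert (Hprod : 0 < (- M') * (c / M' - s ^ 2)) by (apply Rmult_lt_0_compat; lra).
  replace ((- M') * (c / M' - s ^ 2)) with (M' * s ^ 2 - c) in Hprod by (field; lra).
  apply Rlt_le_trans with M'; [|exact HM1].
  apply Rmult_lt_reg_r with (s ^ 2); [exact Hs2|].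
  replace (c / s ^ 2 * s ^ 2) with c by (field; lra). lra.
Qed.

Theorem mainTheorem2 (E0 : R) (phi : R -> R) (n : nat) :
  0 < E0 ->
  standing_phi phi n ->
  (n <= 3)%nat ->
  (forall M : R, exists V0, 0 < V0 < E0 /\
     forall V, V0 <= V < E0 -> Ifun phi E0 V < M) /\
  (exists V0, 0 < V0 < E0 /\
     forall V, V0 <= V < E0 -> Ifun phi E0 V <= 0).
Proof.
  intros HE0 Hphi Hn.
  destruct (Ifun_below_inv_square_near_E0 E0 phi n HE0 Hphi Hn) as [del [c [Hdel [Hc Hbound]]]].
  assert (Hlim : forall M, exists V0, 0 < V0 < E0 /\ forall V, V0 <= V < E0 -> Ifun phi E0 V < M).
  { intros M. destruct (inv_square_below c (Rmin del E0) M Hc) as [s0 [Hs0 Hbelow]].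
    { apply Rmin_pos; assumption. }
    pose proof (Rmin_l del E0). pose proof (Rmin_r del E0).
    exists (E0 - s0). split; [lra|]. intros V HV.
    replace V with (E0 - (E0 - V)) by ring.
    apply Rlt_trans with (c / (E0 - V) ^ 2); [apply Hbound; lra|apply Hbelow; lra]. }
  split; [exact Hlim|].
  destruct (Hlim 0) as [V0 [HV0 HI]]. exists V0. split; [exact HV0|].
  intros V HV. left. apply HI, HV.
Qed.
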